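(* Let $\mathbb{E}$ be a finite-dimensional Euclidean space, $\mathcal{K}\subseteq\mathbb{E}$ a closed convex cone, $\mathcal{A}:\mathbb{E}\to\mathbb{R}^m$ a surjective linear map and $b\in\mathbb{R}^m$, and let $\mathcal{F}=\{x\in\mathcal{K}:\mathcal{A}x=b\}\neq\emptyset$. Suppose that strict feasibility fails for $\mathcal{F}$, i.e. $\mathcal{F}\cap\operatorname{relint}(\mathcal{K})=\emptyset$. Then every point of $\mathcal{F}$ is degenerate.
   Context: $\mathcal{K}^*=\{z\in\mathbb{E}:\langle z,x\rangle\ge 0\ \forall x\in\mathcal{K}\}$ is the dual cone. For $\bar x\in\mathcal{K}$, $\operatorname{face}(\bar x,\mathcal{K})$ denotes the minimal face of $\mathcal{K}$ containing $\bar x$ (the intersection of all faces of $\mathcal{K}$ containing $\bar x$). For a face $f$ of $\mathcal{K}$, its conjugate face is $f^\Delta=\{z\in\mathcal{K}^*:\langle z,x\rangle=0\ \forall x\in f\}$. A point $\bar x\in\mathcal{F}$ is called nondegenerate if $\operatorname{span}\big(\operatorname{face}(\bar x,\mathcal{K})^\Delta\big)\cap\mathcal{R}(\mathcal{A}^* )=\{0\}$, where $\mathcal{R}(\mathcal{A}^* )$ is the range of the adjoint $\mathcal{A}^*$; otherwise $\bar x$ is degenerate. *)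

(* The Euclidean space E is modelled as row vectors 'rV[R]_n (R : realType)
   with the standard inner product; the linear map A : E -> R^m is given by a
   matrix acting on row vectors, x |-> x *m A. *)
From HB Require Import structures.
From mathcomp Require Import all_boot all_order all_algebra.
From mathcomp Require Import all_classical all_reals topology normedtype.
Set Implicit Arguments. Unset Strict Implicit. Unset Printing Implicit Defensive.
Import Order.TTheory GRing.Theory Num.Theory.
Import numFieldNormedType.Exports.
Local Open Scope ring_scope.
Local Open Scope classical_set_scope.

Section Defs.
Variables (R : realType) (n : nat).
Notation E := 'rV[R]_n.

Definition dotE (x y : E) : R := (x *m y^T) 0 0.

Definition convex_set (S : set E) : Prop :=
  forall x y (t : R), S x -> S y -> 0 <= t -> t <= 1 -> S (t *: x + (1 - t) *: y).

Definition cone (S : set E) : Prop :=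
  forall x (t : R), S x -> 0 <= t -> S (t *: x).

Definition closed_convex_cone (K : set E) : Prop :=
  closed K /\ convex_set K /\ cone K.

Definition dual_cone (K : set E) : set E :=
  [set z | forall x, K x -> 0 <= dotE z x].

Definition aff_hull (S : set E) : set E :=
  [set v | exists (k : nat) (u : 'I_k -> E) (c : 'I_k -> R),
      (forall i, S (u i)) /\ \sum_(i < k) c i = 1 /\ v = \sum_(i < k) c i *: u i].

Definition span_set (S : set E) : set E :=
  [set v | exists (k : nat) (u : 'I_k -> E) (c : 'I_k -> R),
      (forall i, S (u i)) /\ v = \sum_(i < k) c i *: u i].

Definition relint (S : set E) : set E :=
  [set x | S x /\ exists e : R, 0 < e /\
      forall y, aff_hull S y -> dotE (y - x) (y - x) < e ^+ 2 -> S y].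

Definition is_face (f K : set E) : Prop :=
  f `<=` K /\ convex_set f /\
  forall x y (t : R), K x -> K y -> 0 < t -> t < 1 ->
    f (t *: x + (1 - t) *: y) -> f x /\ f y.

Definition min_face (xb : E) (K : set E) : set E :=
  [set z | forall f, is_face f K -> f xb -> f z].

Definition conj_face (f K : set E) : set E :=
  [set z | dual_cone K z /\ forall x, f x -> dotE z x = 0].

End Defs.

(* range of the adjoint A^* : R^m -> E of x |-> x *m A, i.e. y |-> y *m A^T *)
Definition range_adj (R : realType) (n m : nat) (A : 'M[R]_(n, m)) : set 'rV[R]_n :=
  [set z | exists y : 'rV[R]_m, z = y *m A^T].

Definition feasible_set (R : realType) (n m : nat) (K : set 'rV[R]_n)
  (A : 'M[R]_(n, m)) (b : 'rV[R]_m) : set 'rV[R]_n :=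
  [set x | K x /\ x *m A = b].

Definition nondegenerate (R : realType) (n m : nat) (K : set 'rV[R]_n)
  (A : 'M[R]_(n, m)) (xb : 'rV[R]_n) : Prop :=
  span_set (conj_face (min_face xb K) K) `&` range_adj A = [set 0].

Definition degenerate (R : realType) (n m : nat) (K : set 'rV[R]_n)
  (A : 'M[R]_(n, m)) (xb : 'rV[R]_n) : Prop :=
  ~ nondegenerate K A xb.

(* The work is done by a facial reduction certificate: when no feasible point
   lies in relint K, there is y <> 0 with A^T y in the dual cone and
   <y, b> = 0.  For a feasible xb, <A^T y, xb> = <y, b> = 0, so xb lies in the
   exposed face of K cut out by A^T y; that face contains face(xb, K), hence
   the nonzero vector A^T y (A is onto) lies in face(xb, K)^Δ and in the range
   of A^T.
   For the certificate, take rows U of K spanning span K; their sum xs is in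
   relint K.  If A(span K) <> R^m, any y orthogonal to A(span K) works.
   Otherwise a nearest-point argument separates the point -2 A xs from the
   closure of the cone A(K) - R_+ b, and the separating vector is the
   certificate: were that point in the closure, a nearby point of the cone
   could be corrected, since U A has a right inverse, into a feasible point of
   relint K. *)

From HB Require Import structures.
From mathcomp Require Import all_boot all_order all_algebra.
From mathcomp Require Import all_classical all_reals topology normedtype.
From mathcomp Require Import ring lra derive.
Set Implicit Arguments. Unset Strict Implicit. Unset Printing Implicit Defensive.
Import Order.TTheory GRing.Theory Num.Theory.
Import numFieldNormedType.Exports.
Local Open Scope ring_scope.
Local Open Scope classical_set_scope.

Section InnerProduct.
Variables (R : realType) (n : nat).
Implicit Types x y z : 'rV[R]_n.

Lemma dotE_sum x y : dotE x y = \sum_j x 0 j * y 0 j.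
Proof. by rewrite /dotE !mxE; apply: eq_bigr => j _; rewrite mxE. Qed.

Lemma dotEC x y : dotE x y = dotE y x.
Proof. by rewrite !dotE_sum; apply: eq_bigr => j _; rewrite mulrC. Qed.

Lemma dotEDr x y z : dotE z (x + y) = dotE z x + dotE z y.
Proof. by rewrite !dotE_sum -big_split; apply: eq_bigr => j _; rewrite mxE mulrDr. Qed.

Lemma dotEZr a x z : dotE z (a *: x) = a * dotE z x.
Proof. by rewrite !dotE_sum mulr_sumr; apply: eq_bigr => j _; rewrite mxE mulrCA. Qed.

Lemma dotENr x z : dotE z (- x) = - dotE z x.
Proof. by rewrite -scaleN1r dotEZr mulN1r. Qed.

Lemma dotEBr x y z : dotE z (x - y) = dotE z x - dotE z y.
Proof. by rewrite dotEDr dotENr. Qed.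

Lemma dotEDl x y z : dotE (x + y) z = dotE x z + dotE y z.
Proof. by rewrite dotEC dotEDr !(dotEC z). Qed.

Lemma dotEZl a x z : dotE (a *: x) z = a * dotE x z.
Proof. by rewrite dotEC dotEZr dotEC. Qed.

Lemma dotE_expand x y a :
  dotE (x + a *: y) (x + a *: y) = dotE x x + a * (2 * dotE x y + a * dotE y y).
Proof. by rewrite dotEDl !dotEDr !dotEZl !dotEZr (dotEC y x); ring. Qed.

Lemma dotE0l z : dotE 0 z = 0.
Proof. by rewrite -(scale0r 0) dotEZl mul0r. Qed.

Lemma dotE_ge0 x : 0 <= dotE x x.
Proof. by rewrite dotE_sum sumr_ge0 // => j _; rewrite -expr2 sqr_ge0. Qed.

Lemma sqr_coord_le_dotE x j : x 0 j ^+ 2 <= dotE x x.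
Proof.
rewrite dotE_sum (bigD1 j) //= expr2 lerDl sumr_ge0 // => i _.
by rewrite -expr2 sqr_ge0.
Qed.

Lemma dotE_eq0 x : (dotE x x == 0) = (x == 0).
Proof.
apply/eqP/eqP => [x0|->]; last exact: dotE0l.
apply/rowP => j; rewrite mxE; apply/eqP; rewrite -sqrf_eq0 eq_le sqr_ge0 andbT.
by rewrite -x0 sqr_coord_le_dotE.
Qed.

Lemma dotE_gt0 x : x != 0 -> 0 < dotE x x.
Proof. by rewrite -dotE_eq0 lt_def dotE_ge0 andbT. Qed.

Lemma normr_coord_lt_dotE x e j : 0 <= e -> dotE x x < e ^+ 2 -> `|x 0 j| < e.
Proof.
move=> e0 xe; rewrite -(ltr_pXn2r (ltn0Sn 1)) ?nnegrE ?normr_ge0 //.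
by rewrite real_normK ?num_real // (le_lt_trans (sqr_coord_le_dotE x j)).
Qed.

Lemma dotE_mulmx_tr m (M : 'M[R]_(n, m)) (y : 'rV[R]_m) x :
  dotE (y *m M^T) x = dotE y (x *m M).
Proof. by rewrite /dotE trmx_mul mulmxA. Qed.

End InnerProduct.

Lemma surj_mulmx_tr_neq0 (R : realType) n m (A : 'M[R]_(n, m)) (y : 'rV[R]_m) :
  (forall y : 'rV[R]_m, exists x : 'rV[R]_n, x *m A = y) ->
  y != 0 -> y *m A^T != 0.
Proof.
move=> surj ny; have [x xA] := surj y; apply: contraNneq ny => yA0.
by rewrite -dotE_eq0 -{2}xA -dotE_mulmx_tr yA0 dotE0l.
Qed.

Lemma normr_mulmx_coord_le (R : realDomainType) p q (d : 'rV[R]_p)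
    (P : 'M[R]_(p, q)) e i :
  0 <= e -> (forall j, `|d 0 j| <= e) ->
  `|(d *m P) 0 i| <= e * \sum_i' \sum_j `|P j i'|.
Proof.
move=> e0 de; rewrite mxE; apply: le_trans (ler_norm_sum _ _ _) _.
apply: (@le_trans _ _ (e * \sum_j `|P j i|)).
  by rewrite mulr_sumr ler_sum // => j _; rewrite normrM ler_wpM2r.
rewrite ler_wpM2l // (bigD1 i) //= lerDl sumr_ge0 // => i' _.
by rewrite sumr_ge0.
Qed.

Section Faces.
Variables (R : realType) (n : nat) (K : set 'rV[R]_n).
Hypothesis cK : convex_set K.

Lemma exposed_face z : dual_cone K z -> is_face [set x | K x /\ dotE z x = 0] K.
Proof.
move=> Kz; split; first by move=> x [].
split=> [x y t [Kx zx] [Ky zy] t0 t1|x y t Kx Ky t0 t1 [_]].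
  by split; [exact: cK | rewrite dotEDr !dotEZr zx zy !mulr0 addr0].
rewrite dotEDr !dotEZr => zxy.
have zx := Kz _ Kx; have zy := Kz _ Ky.
have /eqP : t * dotE z x = 0 by nra.
rewrite mulf_eq0 gt_eqF //= => /eqP zx0.
have /eqP : (1 - t) * dotE z y = 0 by nra.
by rewrite mulf_eq0 subr_eq0 gt_eqF //= => /eqP zy0.
Qed.

Lemma dual_orthogonal_conj_face z xb :
  dual_cone K z -> K xb -> dotE z xb = 0 -> conj_face (min_face xb K) K z.
Proof.
move=> Kz Kxb zxb; split=> // x xmin.
by have [] := xmin _ (exposed_face Kz) (conj Kxb zxb).
Qed.

Lemma degenerate_of_dual_normal m (A : 'M[R]_(n, m)) y xb :
  y *m A^T != 0 -> dual_cone K (y *m A^T) -> K xb ->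
  dotE (y *m A^T) xb = 0 -> degenerate K A xb.
Proof.
move=> nz Kz Kxb zxb nondeg.
have : (span_set (conj_face (min_face xb K) K) `&` range_adj A) (y *m A^T).
  split; last by exists y.
  exists 1%N, (fun=> y *m A^T), (fun=> 1); split=> [_|].
    exact: dual_orthogonal_conj_face.
  by rewrite big_ord1 scale1r.
by rewrite nondeg => /eqP; rewrite (negbTE nz).
Qed.

End Faces.

Lemma exists_spanning_rows (R : realType) n (K : set 'rV[R]_n) :
  exists k (U : 'M[R]_(k, n)),
    (forall i, K (row i U)) /\ forall v, K v -> (v <= U)%MS.
Proof.
pose P (r : nat) := `[< exists k (U : 'M[R]_(k, n)), (forall i, K (row i U)) /\ \rank U = r >].
have P0 : exists r, P r.
  by exists 0%N; apply/asboolP; exists 0%N, 0; split=> [[]|]; rewrite ?mxrank0.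
have Pn r : P r -> (r <= n)%N by move=> /asboolP[k [U [_ <-]]]; exact: rank_leq_col.
have [r /asboolP[k [U [KU <-]]] maxU] := ex_maxnP P0 Pn.
exists k, U; split=> // v Kv; apply: contraT => vU.
have : (\rank (col_mx U v) <= \rank U)%N.
  apply: maxU; apply/asboolP; exists (k + 1)%N, (col_mx U v); split=> // i.
  rewrite -(fintype.splitK i); case: (fintype.split i) => j /=.
    by rewrite rowKu.
  by rewrite rowKd row_id.
rewrite leqNgt => /negP[]; apply: rank_ltmx.
by rewrite ltmxE -addsmxE addsmxSl /= -addsmxE addsmx_sub submx_refl /= vU.
Qed.

Section ConvexCone.
Variables (R : realType) (n : nat) (K : set 'rV[R]_n).
Hypotheses (cK : convex_set K) (coK : cone K) (K0 : K 0).

Lemma cone_addr x y : K x -> K y -> K (x + y).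
Proof.
move=> Kx Ky; have two_ge0 : (0 : R) <= 2 by [].
have mid : K (2^-1 *: x + (1 - 2^-1) *: y).
  by apply: cK; rewrite ?invr_ge0 // invf_le1 ?ler1n.
have two_half : (2 : R) * (1 - 2^-1) = 1 by field.
have -> : x + y = 2 *: (2^-1 *: x + (1 - 2^-1) *: y).
  by rewrite scalerDr !scalerA mulfV ?pnatr_eq0 // two_half !scale1r.
exact: coK.
Qed.

Lemma cone_comb_rows k (U : 'M[R]_(k, n)) (c : 'rV[R]_k) :
  (forall i, K (row i U)) -> (forall i, 0 <= c 0 i) -> K (c *m U).
Proof.
move=> KU c0; rewrite mulmx_sum_row.
by apply: (big_ind K) => // [|i _]; [exact: cone_addr | exact: coK].
Qed.

Variables (k : nat) (U : 'M[R]_(k, n)).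
Hypotheses (KU : forall i, K (row i U)) (spanU : forall v, K v -> (v <= U)%MS).

Lemma aff_hull_sub_rowspace y : aff_hull K y -> (y <= U)%MS.
Proof.
move=> [l [u [c [Ku [_ ->]]]]].
by apply: summx_sub => i _; apply/scalemx_sub/spanU.
Qed.

Lemma relint_rows_sum_addr a x : 0 < a -> K x -> relint K (a *: (const_mx 1 *m U) + x).
Proof.
move=> a0 Kx; set z := _ + x.
have Kpos (c : 'rV[R]_k) : (forall i, 0 <= c 0 i) -> K (c *m U + x).
  by move=> c0; apply: cone_addr => //; exact: cone_comb_rows.
have zE : z = (a *: const_mx 1) *m U + x by rewrite /z scalemxAl.
split; first by rewrite zE; apply: Kpos => i; rewrite !mxE mulr1 ltW.
set S := \sum_i \sum_j `|pinvmx U j i|.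
have S0 : 0 <= S by rewrite sumr_ge0 // => i _; rewrite sumr_ge0.
have e0 : 0 < a / (1 + S) by rewrite divr_gt0 //; lra.
exists (a / (1 + S)); split=> // y /aff_hull_sub_rowspace yU yz.
have dU : (y - z <= U)%MS.
  by rewrite addmx_sub // eqmx_opp zE addmx_sub ?submxMl ?spanU.
set w := (y - z) *m pinvmx U.
have -> : y = (a *: const_mx 1 + w) *m U + x.
  by rewrite mulmxDl mulmxKpV // addrAC -zE addrC subrK.
have eS : a / (1 + S) * S < a.
  by rewrite mulrAC ltr_pdivrMr ?ltr_pM2l //; lra.
apply: Kpos => i; rewrite 3!mxE mulr1.
have := normr_mulmx_coord_le (pinvmx U) i (ltW e0)
  (fun j => ltW (normr_coord_lt_dotE j (ltW e0) yz)).
by rewrite -/w -/S ler_norml => /andP[wi _]; lra.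
Qed.

End ConvexCone.

Lemma continuous_sum (R : realType) (T : topologicalType) (I : Type) (r : seq I)
    (F : I -> T -> R) :
  (forall i, continuous (F i)) -> continuous (fun x => \sum_(i <- r) F i x).
Proof.
move=> cF x; elim: r => [|i r IH].
  have -> : (fun y => \sum_(i <- [::]) F i y) = cst 0.
    by apply/funext => y; rewrite big_nil.
  exact: cvg_cst.
have -> : (fun y => \sum_(j <- i :: r) F j y) = F i \+ (fun y => \sum_(j <- r) F j y).
  by apply/funext => y; rewrite big_cons.
exact: (cvgD (cF i x) IH).
Qed.

Lemma closure_stable (T : topologicalType) (G : set T) (h : T -> T) :
  continuous h -> (forall x, G x -> G (h x)) ->
  forall c, closure G c -> closure G (h c).
Proof.
move=> ch hG; suff : closure G `<=` h @^-1` closure G by apply.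
rewrite {1}closureE; apply: smallest_sub.
  exact: (preimage_closed (fun x _ => ch x) (@closed_closure _ G)).
by move=> x Gx; exact/subset_closure/hG.
Qed.

Lemma ge0_of_small_perturbation (R : realFieldType) (a b : R) :
  (forall s, 0 < s -> s <= 1 -> 0 <= a + s * b) -> 0 <= a.
Proof.
move=> H; rewrite leNgt; apply/negP => a0.
have b0 := normr_ge0 b; have bb := ler_norm b.
have d0 : 0 < `|b| + 1 - a by lra.
pose s := - a / (`|b| + 1 - a).
have hs : s * (`|b| + 1 - a) = - a by rewrite /s mulfVK // gt_eqF.
have s0 : 0 < s by rewrite /s divr_gt0 // oppr_gt0.
have s1 : s <= 1 by rewrite /s ler_pdivrMr // mul1r; lra.
have := H s s0 s1; nra.
Qed.

Section NearestPoint.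
Variables (R : realType) (m : nat).
Implicit Types (C G : set 'rV[R]_m) (p c v : 'rV[R]_m).
Local Notation dist2 p x := (dotE (x - p) (x - p)).

Lemma continuous_dist2 p : continuous (fun x : 'rV[R]_m => dist2 p x).
Proof.
have -> : (fun x : 'rV[R]_m => dist2 p x) = fun x => \sum_j (x 0 j - p 0 j) * (x 0 j - p 0 j).
  by apply/funext => x; rewrite dotE_sum; apply: eq_bigr => j _; rewrite !mxE.
apply: continuous_sum => j x.
have cj : (fun y : 'rV[R]_m => y 0 j - p 0 j) @ x --> x 0 j - p 0 j.
  exact: (cvgB (@coord_continuous R 1 m 0 j x) (cvg_cst _)).
exact: (cvgM cj cj).
Qed.

Lemma exists_nearest_point C p : closed C -> C !=set0 ->
  exists2 c, C c & forall t, C t -> dist2 p c <= dist2 p t.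
Proof.
move=> Ccl [c0 Cc0]; set r := dist2 p c0.
pose D := C `&` [set x | dist2 p x <= r].
have D0 : D !=set0 by exists c0; split=> //=; exact: lexx.
have Dcl : closed D.
  apply: closedI => //; apply: (preimage_closed (D := [set s | s <= r])) => //.
  by move=> x _; exact: continuous_dist2.
have Dnorm x : D x -> `|x| <= `|p| + (1 + r).
  move=> [_ xr]; rewrite -{1}(subrK p x); apply: le_trans (ler_normD _ _) _.
  rewrite [leLHS]addrC lerD2l [leLHS]/Num.norm /= mx_normrE.
  apply: bigmax_le => [|[i j] _]; first by have := dotE_ge0 (c0 - p); rewrite -/r; lra.
  rewrite (ord1 i) /=; have := le_trans (sqr_coord_le_dotE (x - p) j) xr.
  by rewrite -real_normK ?num_real //; have := normr_ge0 ((x - p) 0 j); nra.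
have Dbd : [bounded x | x in D].
  rewrite /bounded_near; near=> M => x Dx /=; apply: le_trans (Dnorm x Dx) _.
  by near: M; apply: nbhs_pinfty_ge; exact: num_real.
have [c /[!inE] -[Cc cr] cmin] := EVT_min_rV D0 (bounded_closed_compact Dbd Dcl)
  (continuous_subspaceT (@continuous_dist2 p)).
exists c => // t Ct; have [tr|/ltW rt] := lerP (dist2 p t) r.
  by apply: cmin; rewrite inE.
exact: le_trans cr rt.
Unshelve. all: by end_near.
Qed.

Lemma nearest_point_variational C p c v :
  (forall t, C t -> dist2 p c <= dist2 p t) ->
  (forall s, 0 < s -> s <= 1 -> C (c + s *: v)) -> 0 <= dotE (c - p) v.
Proof.
move=> cmin Cv.
suff : 0 <= 2 * dotE (c - p) v by rewrite pmulr_rge0.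
apply: (@ge0_of_small_perturbation _ _ (dotE v v)) => s s0 s1.
have := cmin _ (Cv s s0 s1); rewrite addrAC dotE_expand lerDl.
by rewrite pmulr_rge0.
Qed.

Lemma separation_closure_cone G p :
  G 0 -> (forall x y, G x -> G y -> G (x + y)) ->
  (forall a x, 0 <= a -> G x -> G (a *: x)) -> ~ closure G p ->
  exists y, (forall g, G g -> 0 <= dotE y g) /\ dotE y p < 0.
Proof.
move=> G0 Gadd Gscale npG.
have clG0 : closure G !=set0 by exists 0; exact: subset_closure.
have [c Gc cmin] := @exists_nearest_point _ p (@closed_closure _ G) clG0.
have scale_closure a : 0 <= a -> closure G (a *: c).
  move=> a0; apply: (closure_stable (@scaler_continuous _ _ a)) => // x.
  exact: Gscale.
exists (c - p); split.
  move=> g Gg; apply: nearest_point_variational cmin _ => s s0 _.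
  apply: (@closure_stable _ G (fun x => x + s *: g)) => // [x|x Gx].
    exact: (cvgD (@cvg_id _ (nbhs x)) (cvg_cst _)).
  by apply: Gadd => //; apply: Gscale => //; exact: ltW.
have yc : dotE (c - p) c = 0.
  apply/eqP; rewrite eq_le; apply/andP; split; last first.
    apply: nearest_point_variational cmin _ => s s0 _.
    by rewrite -{1}(scale1r c) -scalerDl; apply: scale_closure; lra.
  rewrite -oppr_ge0 -dotENr; apply: nearest_point_variational cmin _ => s s0 s1.
  by rewrite scalerN -scaleNr -{1}(scale1r c) -scalerDl; apply: scale_closure; lra.
have : 0 < dist2 p c.
  apply: dotE_gt0; rewrite subr_eq0; apply/eqP => cp.
  by apply: npG; rewrite -cp.
by rewrite dotEBr yc; lra.
Qed.

End NearestPoint.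

Section FacialReduction.
Variables (R : realType) (n m : nat) (K : set 'rV[R]_n).
Variables (A : 'M[R]_(n, m)) (b : 'rV[R]_m).
Hypotheses (cK : convex_set K) (coK : cone K) (K0 : K 0).

Let image_cone := [set g | exists x t, [/\ K x, 0 <= t & g = x *m A - t *: b]].

Lemma image_cone0 : image_cone 0.
Proof. by exists 0, 0; rewrite mul0mx scale0r subr0. Qed.

Lemma image_cone_addr x y : image_cone x -> image_cone y -> image_cone (x + y).
Proof.
move=> [x1 [t1 [Kx1 t10 ->]]] [x2 [t2 [Kx2 t20 ->]]].
exists (x1 + x2), (t1 + t2); split; [exact: (cone_addr cK coK) | exact: addr_ge0 |].
by rewrite mulmxDl scalerDl opprD addrACA.
Qed.

Lemma image_cone_scale a x : 0 <= a -> image_cone x -> image_cone (a *: x).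
Proof.
move=> a0 [x1 [t1 [Kx1 t10 ->]]]; exists (a *: x1), (a * t1).
by split; [exact: coK | exact: mulr_ge0 | rewrite scalerBr -scalemxAl scalerA].
Qed.

Section SpanningRows.
Variables (k : nat) (U : 'M[R]_(k, n)).
Hypotheses (KU : forall i, K (row i U)) (spanU : forall v, K v -> (v <= U)%MS).
Local Notation xs := (const_mx 1 *m U).

Lemma orthogonal_normal_of_not_row_full : ~~ row_full (U *m A) ->
  exists2 y : 'rV[R]_m, y != 0 & forall v, K v -> dotE (y *m A^T) v = 0.
Proof.
move=> nrf; have /rowV0Pn[y /sub_kermxP yUA ny] : kermx (U *m A)^T != 0.
  rewrite -mxrank_eq0 mxrank_ker mxrank_tr subn_eq0 -ltnNge ltn_neqAle.
  by rewrite rank_leq_col andbT.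
exists y => // v Kv.
have [w ->] : exists w, v = w *m U by exists (v *m pinvmx U); rewrite mulmxKpV ?spanU.
by rewrite dotE_mulmx_tr -mulmxA -dotE_mulmx_tr yUA dotE0l.
Qed.

Lemma row_full_perturbation : row_full (U *m A) -> exists2 eta : R, 0 < eta &
  forall d : 'rV[R]_m, (forall j, `|d 0 j| <= eta) ->
  exists2 x, K x & x *m A = xs *m A + d.
Proof.
move=> /row_fullP[C CUA]; set S := \sum_i \sum_j `|C j i|.
have S0 : 0 <= S by rewrite sumr_ge0 // => i _; rewrite sumr_ge0.
have eta0 : 0 < (1 + S)^-1 by rewrite invr_gt0; lra.
have etaS : (1 + S)^-1 * S <= 1.
  by rewrite mulrC ler_pdivrMr ?mul1r; lra.
exists (1 + S)^-1 => // d dsmall; exists ((const_mx 1 + d *m C) *m U).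
  apply: cone_comb_rows => // i; rewrite mxE [const_mx _ _ _]mxE.
  have := normr_mulmx_coord_le C i (ltW eta0) dsmall.
  by rewrite -/S ler_norml => /andP[dCi _]; lra.
by rewrite !mulmxDl -!mulmxA CUA mulmx1.
Qed.

(* Half of the point -2 A xs is absorbed by the perturbation; the other copy of
   xs is the margin that puts the corrected point in relint K. *)
Lemma strictly_feasible_of_closure x0 : K x0 -> x0 *m A = b ->
  row_full (U *m A) -> closure image_cone (- (2 *: xs) *m A) ->
  exists2 w, feasible_set K A b w & relint K w.
Proof.
move=> Kx0 x0A rf clG.
have [eta eta0 perturb] := row_full_perturbation rf.
have [_ [[x1 [t [Kx1 t0 ->]]] near_p]] := clG _ (nbhsx_ballx _ _ eta0).
set d := - (2 *: xs) *m A - (x1 *m A - t *: b).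
have [x2 Kx2 x2A] : exists2 x2, K x2 & x2 *m A = xs *m A + d.
  apply: perturb => j; apply: ltW.
  by move: near_p => [_ /(_ 0 j)]; rewrite /ball /= /d !mxE.
have wA : (xs + (x1 + x2)) *m A = t *: b.
  rewrite !mulmxDl x2A /d mulNmx -scalemxAl.
  by apply/rowP => j; rewrite !mxE; lra.
set u := (t + 1)^-1.
have u0 : 0 < u by rewrite invr_gt0; lra.
have rw : relint K (u *: (xs + (x1 + x2) + x0)).
  rewrite -addrA scalerDr; apply: relint_rows_sum_addr => //.
  apply: coK; last exact: ltW.
  by apply: (cone_addr cK coK) => //; exact: (cone_addr cK coK).
exists (u *: (xs + (x1 + x2) + x0)) => //; split; first exact: rw.1.
rewrite -scalemxAl mulmxDl wA x0A -{2}(scale1r b) -scalerDl scalerA mulVf //.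
  by rewrite scale1r.
by rewrite gt_eqF //; lra.
Qed.

End SpanningRows.

Lemma facial_reduction_certificate x0 : K x0 -> x0 *m A = b ->
  feasible_set K A b `&` relint K = set0 ->
  exists y : 'rV[R]_m, [/\ y != 0, dual_cone K (y *m A^T) & dotE y b = 0].
Proof.
move=> Kx0 x0A noint.
have yb_ge0 y : dual_cone K (y *m A^T) -> 0 <= dotE y b.
  by move=> yK; rewrite -x0A -dotE_mulmx_tr; exact: yK.
have [k [U [KU spanU]]] := exists_spanning_rows K.
have [rf|nrf] := boolP (row_full (U *m A)); last first.
  have [y ny yK] := orthogonal_normal_of_not_row_full spanU nrf.
  exists y; split=> //; first by move=> v /yK ->.
  by rewrite -x0A -dotE_mulmx_tr yK.
have [clG|nclG] := pselect (closure image_cone (- (2 *: (const_mx 1 *m U)) *m A)).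
  have [w Fw rw] := strictly_feasible_of_closure KU spanU Kx0 x0A rf clG.
  by have : (feasible_set K A b `&` relint K) w by []; rewrite noint.
have [y [yG yp]] :=
  separation_closure_cone image_cone0 image_cone_addr image_cone_scale nclG.
have yK : dual_cone K (y *m A^T).
  move=> v Kv; rewrite dotE_mulmx_tr; apply: yG.
  by exists v, 0; rewrite scale0r subr0.
exists y; split=> //.
  by apply: contraTneq yp => ->; rewrite dotE0l ltxx.
apply/eqP; rewrite eq_le yb_ge0 // andbT -oppr_ge0 -dotENr; apply: yG.
by exists 0, 1; rewrite mul0mx scale1r add0r.
Qed.

End FacialReduction.

Theorem theorem3p1 (R : realType) (n m : nat) (K : set 'rV[R]_n)
  (A : 'M[R]_(n, m)) (b : 'rV[R]_m) :
  closed_convex_cone K ->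
  (forall y : 'rV[R]_m, exists x : 'rV[R]_n, x *m A = y) ->
  feasible_set K A b !=set0 ->
  feasible_set K A b `&` relint K = set0 ->
  forall xb, feasible_set K A b xb -> degenerate K A xb.
Proof.
move=> [_ [cK coK]] surj [x0 [Kx0 x0A]] noint xb [Kxb xbA].
have K0 : K 0 by rewrite -(scale0r x0); exact: coK.
have [y [ny yK yb]] := facial_reduction_certificate cK coK K0 Kx0 x0A noint.
apply: (degenerate_of_dual_normal cK (surj_mulmx_tr_neq0 surj ny) yK Kxb).
by rewrite dotE_mulmx_tr xbA.
Qed.
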